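(* Let $P,Q\in\Gamma_n$ and $0<r\le R$ with $r\le p_i/q_i\le R$ for all $i$. Let $s,t\in\mathbb{R}$. If $s\ge t$ and $t\le2$, then $$\frac{1}{4r^{t-2}}\Big(\frac{r+1}{2}\Big)^{s-2}\Phi_t(P\|Q)\le\Omega_s(Q\|P)\le\frac{1}{4R^{t-2}}\Big(\frac{R+1}{2}\Big)^{s-2}\Phi_t(P\|Q).$$ If $s\le t$ and $t\ge2$, then $$\frac{1}{4R^{t-2}}\Big(\frac{R+1}{2}\Big)^{s-2}\Phi_t(P\|Q)\le\Omega_s(Q\|P)\le\frac{1}{4r^{t-2}}\Big(\frac{r+1}{2}\Big)^{s-2}\Phi_t(P\|Q).$$
   Context: $\Gamma_n=\{P=(p_1,\dots,p_n): p_i>0,\ \sum_i p_i=1\}$, $n\ge2$. For $P,Q\in\Gamma_n$ and $s\in\mathbb{R}$: $\Phi_s(P\|Q)=[s(s-1)]^{-1}\big[\sum_i p_i^s q_i^{1-s}-1\big]$ for $s\ne0,1$; $\Phi_0(P\|Q)=\sum_i q_i\ln(q_i/p_i)$; $\Phi_1(P\|Q)=\sum_i p_i\ln(p_i/q_i)$. $\Omega_s(Q\|P)=[s(s-1)]^{-1}\big[\sum_i q_i\big(\frac{p_i+q_i}{2q_i}\big)^s-1\big]$ for $s\ne0,1$; $\Omega_0(Q\|P)=\sum_i q_i\ln\frac{2q_i}{p_i+q_i}$; $\Omega_1(Q\|P)=\sum_i\frac{p_i+q_i}{2}\ln\frac{p_i+q_i}{2q_i}$. *)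

From Stdlib Require Import Reals.
Open Scope R_scope.

Fixpoint sumn (n : nat) (f : nat -> R) : R :=
  match n with O => 0 | S m => sumn m f + f m end.

Definition Gamma (n : nat) (p : nat -> R) : Prop :=
  (forall i, (i < n)%nat -> 0 < p i) /\ sumn n p = 1.

Definition Phi (n : nat) (s : R) (p q : nat -> R) : R :=
  if Req_EM_T s 0 then sumn n (fun i => q i * ln (q i / p i))
  else if Req_EM_T s 1 then sumn n (fun i => p i * ln (p i / q i))
  else / (s * (s - 1)) *
       (sumn n (fun i => Rpower (p i) s * Rpower (q i) (1 - s)) - 1).

Definition Omega (n : nat) (s : R) (q p : nat -> R) : R :=
  if Req_EM_T s 0 then sumn n (fun i => q i * ln (2 * q i / (p i + q i)))
  else if Req_EM_T s 1 then
    sumn n (fun i => (p i + q i) / 2 * ln ((p i + q i) / (2 * q i)))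
  else / (s * (s - 1)) *
       (sumn n (fun i => q i * Rpower ((p i + q i) / (2 * q i)) s) - 1).

(* Both divergences are f-divergences [sum_i q_i f (p_i / q_i)]: [Phi_t] with generator
   [f_t], where [f_t'' u = u^(t-2)], and [Omega_s] with [g_s u = f_s ((u+1)/2)], where
   [g_s'' u = 1/4 ((u+1)/2)^(s-2)].  If [a f'' <= b g''] on [[r, R]] and [f 1 = g 1 = 0],
   then [b g - a f] is convex on an interval containing every ratio [p_i / q_i] and 1, so
   by the tangent line at 1 its f-divergence is nonnegative.  The quotient
   [g_s'' / f_t'' = 1/4 ((u+1)/2)^(s-2) u^(2-t)] is monotone in [u] under either sign
   condition on [s, t], so its values at [r] and [R] give the constants. *)

From Coquelicot Require Import Coquelicot.
From Stdlib Require Import Reals Lra Lia.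
Open Scope R_scope.

Lemma sumn_ext n f g : (forall i, (i < n)%nat -> f i = g i) -> sumn n f = sumn n g.
Proof.
  induction n as [|n IH]; simpl; intros H; auto.
  rewrite IH by (intros; apply H; lia). rewrite H by lia. reflexivity.
Qed.

Lemma sumn_le n f g : (forall i, (i < n)%nat -> f i <= g i) -> sumn n f <= sumn n g.
Proof.
  induction n as [|n IH]; simpl; intros H; [lra|].
  apply Rplus_le_compat; [apply IH; intros|]; apply H; lia.
Qed.

Lemma sumn_lin n a b f g :
  sumn n (fun i => a * f i + b * g i) = a * sumn n f + b * sumn n g.
Proof. induction n as [|n IH]; simpl; [|rewrite IH]; ring. Qed.

Definition fdiv (n : nat) (f : R -> R) (p q : nat -> R) : R :=
  sumn n (fun i => q i * f (p i / q i)).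

Lemma fdiv_lin n a b f g p q :
  fdiv n (fun u => a * f u + b * g u) p q = a * fdiv n f p q + b * fdiv n g p q.
Proof.
  unfold fdiv. rewrite <- sumn_lin. apply sumn_ext. intros i _. ring.
Qed.

Section Distributions.
Variables (n : nat) (p q : nat -> R).
Hypotheses (Gp : Gamma n p) (Gq : Gamma n q).

Lemma mul_ratio i : (i < n)%nat -> q i * (p i / q i) = p i.
Proof. intros Hi. pose proof (proj1 Gq i Hi). field. lra. Qed.

Lemma fdiv_affine a b : fdiv n (fun u => a + b * u) p q = a + b.
Proof.
  pose proof Gp as [_ Sp]; pose proof Gq as [_ Sq].
  unfold fdiv. rewrite (sumn_ext n _ (fun i => a * q i + b * p i)).
  - rewrite sumn_lin, Sp, Sq. ring.
  - intros i Hi. rewrite <- (mul_ratio i Hi) at 2. ring.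
Qed.

Lemma fdiv_le f g :
  (forall i, (i < n)%nat -> f (p i / q i) <= g (p i / q i)) -> fdiv n f p q <= fdiv n g p q.
Proof.
  intros H. apply sumn_le. intros i Hi.
  apply Rmult_le_compat_l; [apply Rlt_le, (proj1 Gq i Hi)|apply H, Hi].
Qed.

(* The ratios average to 1 with weights [q], so any bounds on them enclose 1. *)
Lemma ratio_bounds_contain_1 r R0 :
  (forall i, (i < n)%nat -> r <= p i / q i <= R0) -> r <= 1 <= R0.
Proof.
  intros B.
  pose proof (fdiv_le (fun u => r + 0 * u) (fun u => 0 + 1 * u)
                ltac:(intros i Hi; specialize (B i Hi); lra)) as Hr.
  pose proof (fdiv_le (fun u => 0 + 1 * u) (fun u => R0 + 0 * u)
                ltac:(intros i Hi; specialize (B i Hi); lra)) as HR.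
  rewrite !fdiv_affine in Hr, HR. lra.
Qed.

End Distributions.

Lemma is_derive_continuity_pt f df x : is_derive f x df -> continuity_pt f x.
Proof.
  intros H. apply continuity_pt_filterlim.
  apply (ex_derive_continuous (K := R_AbsRing) (V := R_NormedModule)). exists df. exact H.
Qed.

Lemma mvt_pos g dg a b : (forall z, 0 < z -> is_derive g z (dg z)) -> 0 < a < b ->
  exists c, a <= c <= b /\ g b - g a = dg c * (b - a).
Proof.
  intros Dg Hab.
  destruct (MVT_gen g a b dg) as [c [Hc E]].
  - intros z Hz. apply Dg. rewrite Rmin_left in Hz; lra.
  - intros z Hz. apply (is_derive_continuity_pt g (dg z)), Dg.
    rewrite Rmin_left in Hz; lra.
  - rewrite Rmin_left, Rmax_right in Hc by lra. exists c. split; [exact Hc|exact E].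
Qed.

Section Convexity.
Variables (h h1 h2 : R -> R) (r R0 : R).
Hypothesis r_pos : 0 < r.
Hypothesis h_derive : forall z, 0 < z -> is_derive h z (h1 z).
Hypothesis h1_derive : forall z, 0 < z -> is_derive h1 z (h2 z).
Hypothesis h2_nonneg : forall z, r <= z <= R0 -> 0 <= h2 z.

Lemma convex_derive_le a b : r <= a -> a <= b -> b <= R0 -> h1 a <= h1 b.
Proof.
  intros Ha Hab Hb. destruct Hab as [Hab|<-]; [|lra].
  destruct (mvt_pos h1 h2 a b h1_derive ltac:(lra)) as [c [Hc E]].
  assert (0 <= h2 c) by (apply h2_nonneg; lra). nra.
Qed.

Lemma convex_tangent_le x y : r <= x <= R0 -> r <= y <= R0 -> h x + h1 x * (y - x) <= h y.
Proof.
  intros Hx Hy. destruct (Rtotal_order x y) as [Hxy|[<-|Hxy]]; [|lra|].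
  - destruct (mvt_pos h h1 x y h_derive ltac:(lra)) as [c [Hc E]].
    assert (h1 x <= h1 c) by (apply convex_derive_le; lra). nra.
  - destruct (mvt_pos h h1 y x h_derive ltac:(lra)) as [c [Hc E]].
    assert (h1 c <= h1 x) by (apply convex_derive_le; lra). nra.
Qed.

Lemma fdiv_ge_at_1 n p q : Gamma n p -> Gamma n q ->
  (forall i, (i < n)%nat -> r <= p i / q i <= R0) -> h 1 <= fdiv n h p q.
Proof.
  intros Gp Gq B.
  pose proof (ratio_bounds_contain_1 n p q Gp Gq r R0 B) as H1.
  apply Rle_trans with (fdiv n (fun u => (h 1 - h1 1) + h1 1 * u) p q).
  { rewrite fdiv_affine by assumption. lra. }
  apply (fdiv_le n p q Gq). intros i Hi.
  pose proof (convex_tangent_le 1 (p i / q i) ltac:(lra) (B i Hi)). lra.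
Qed.

End Convexity.

Lemma fdiv_compare n p q r R0 a b (f f1 f2 g g1 g2 : R -> R) :
  0 < r -> Gamma n p -> Gamma n q ->
  (forall i, (i < n)%nat -> r <= p i / q i <= R0) ->
  (forall z, 0 < z -> is_derive f z (f1 z)) -> (forall z, 0 < z -> is_derive f1 z (f2 z)) ->
  (forall z, 0 < z -> is_derive g z (g1 z)) -> (forall z, 0 < z -> is_derive g1 z (g2 z)) ->
  f 1 = 0 -> g 1 = 0 ->
  (forall u, r <= u <= R0 -> a * f2 u <= b * g2 u) ->
  a * fdiv n f p q <= b * fdiv n g p q.
Proof.
  intros r_pos Gp Gq B Df Df1 Dg Dg1 f_at_1 g_at_1 H.
  assert (Jensen : b * g 1 + - a * f 1 <= fdiv n (fun u => b * g u + - a * f u) p q).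
  { apply (fdiv_ge_at_1 (fun u => b * g u + - a * f u) (fun u => b * g1 u + - a * f1 u)
             (fun u => b * g2 u + - a * f2 u) r R0);
      auto; intros z Hz.
    - apply @is_derive_plus; apply is_derive_scal; auto.
    - apply @is_derive_plus; apply is_derive_scal; auto.
    - specialize (H z Hz). lra. }
  rewrite fdiv_lin, f_at_1, g_at_1 in Jensen. lra.
Qed.

Lemma is_derive_Rpower a u : 0 < u -> is_derive (fun x => Rpower x a) u (a * Rpower u (a - 1)).
Proof. intros Hu. apply is_derive_Reals, derivable_pt_lim_power, Hu. Qed.

Lemma Rpower_1_base a : Rpower 1 a = 1.
Proof. unfold Rpower. rewrite ln_1, Rmult_0_r. apply exp_0. Qed.

Lemma Rpower_opp_nat u k : 0 < u -> Rpower u (- INR k) = / u ^ k.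
Proof. intros Hu. rewrite Rpower_Ropp, Rpower_pow; auto. Qed.

Definition power_gen (t u : R) : R :=
  if Req_EM_T t 0 then - ln u
  else if Req_EM_T t 1 then u * ln u
  else / (t * (t - 1)) * (Rpower u t - 1).

Definition power_gen1 (t u : R) : R :=
  if Req_EM_T t 0 then - / u
  else if Req_EM_T t 1 then ln u + 1
  else / (t - 1) * Rpower u (t - 1).

Lemma power_gen_1 t : power_gen t 1 = 0.
Proof.
  unfold power_gen. rewrite ln_1, Rpower_1_base.
  destruct (Req_EM_T t 0); [|destruct (Req_EM_T t 1)]; ring.
Qed.

Lemma is_derive_power_gen t u : 0 < u -> is_derive (power_gen t) u (power_gen1 t u).
Proof.
  intros Hu. unfold power_gen, power_gen1.
  destruct (Req_EM_T t 0) as [->|H0]; [|destruct (Req_EM_T t 1) as [->|H1]].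
  - auto_derive; [lra|field; lra].
  - auto_derive; [lra|field; lra].
  - replace (/ (t - 1) * Rpower u (t - 1)) with (/ (t * (t - 1)) * (t * Rpower u (t - 1) - 0))
      by (field; split; lra).
    apply is_derive_scal, (is_derive_minus (fun x => Rpower x t) (fun _ => 1)).
    + apply is_derive_Rpower, Hu.
    + auto_derive; auto.
Qed.

Lemma is_derive_power_gen1 t u : 0 < u -> is_derive (power_gen1 t) u (Rpower u (t - 2)).
Proof.
  intros Hu. unfold power_gen1.
  destruct (Req_EM_T t 0) as [->|H0]; [|destruct (Req_EM_T t 1) as [->|H1]].
  - replace (0 - 2) with (- INR 2) by (simpl; ring). rewrite Rpower_opp_nat by exact Hu.
    auto_derive; [lra|field; lra].
  - replace (1 - 2) with (- INR 1) by (simpl; ring). rewrite Rpower_opp_nat by exact Hu.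
    auto_derive; [lra|field; lra].
  - replace (Rpower u (t - 2)) with (/ (t - 1) * ((t - 1) * Rpower u (t - 1 - 1)))
      by (replace (t - 1 - 1) with (t - 2) by ring; field; lra).
    apply is_derive_scal, is_derive_Rpower, Hu.
Qed.

Lemma is_derive_at_half_succ (F F1 : R -> R) u :
  (forall v, 0 < v -> is_derive F v (F1 v)) -> 0 < u ->
  is_derive (fun x => F ((x + 1) / 2)) u (/ 2 * F1 ((u + 1) / 2)).
Proof.
  intros DF Hu. apply (is_derive_comp F (fun x => (x + 1) / 2)).
  - apply DF. lra.
  - auto_derive; [auto|field].
Qed.

Definition omega_gen (s u : R) : R := power_gen s ((u + 1) / 2).

Definition omega_gen1 (s u : R) : R := / 2 * power_gen1 s ((u + 1) / 2).

Lemma omega_gen_1 s : omega_gen s 1 = 0.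
Proof. unfold omega_gen. replace ((1 + 1) / 2) with 1 by field. apply power_gen_1. Qed.

Lemma is_derive_omega_gen s u : 0 < u -> is_derive (omega_gen s) u (omega_gen1 s u).
Proof. apply is_derive_at_half_succ, is_derive_power_gen. Qed.

Lemma is_derive_omega_gen1 s u :
  0 < u -> is_derive (omega_gen1 s) u (/ 4 * Rpower ((u + 1) / 2) (s - 2)).
Proof.
  intros Hu. replace (/ 4) with (/ 2 * / 2) by field.
  rewrite Rmult_assoc. apply is_derive_scal.
  apply (is_derive_at_half_succ (power_gen1 s) (fun v => Rpower v (s - 2))); [|exact Hu].
  apply is_derive_power_gen1.
Qed.

Lemma Rpower_ratio_mul t x y : 0 < x -> 0 < y -> y * Rpower (x / y) t = Rpower x t * Rpower y (1 - t).
Proof.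
  intros Hx Hy. unfold Rpower. rewrite ln_div by assumption.
  rewrite <- (exp_ln y) at 1 by assumption. rewrite <- !exp_plus. f_equal. ring.
Qed.

Lemma half_succ_ratio x y : 0 < y -> (x / y + 1) / 2 = (x + y) / (2 * y).
Proof. intros Hy. field. lra. Qed.

Lemma Phi_fdiv n t p q : Gamma n p -> Gamma n q -> Phi n t p q = fdiv n (power_gen t) p q.
Proof.
  intros [Pp _] [Pq Sq]. unfold Phi, fdiv, power_gen.
  destruct (Req_EM_T t 0); [|destruct (Req_EM_T t 1)].
  - apply sumn_ext. intros i Hi. specialize (Pp i Hi). specialize (Pq i Hi).
    rewrite !ln_div by assumption. ring.
  - apply sumn_ext. intros i Hi. specialize (Pq i Hi). field. lra.
  - set (c := / (t * (t - 1))).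
    rewrite (sumn_ext n (fun i => q i * (c * (Rpower (p i / q i) t - 1)))
              (fun i => c * (Rpower (p i) t * Rpower (q i) (1 - t)) + - c * q i)).
    + rewrite sumn_lin, Sq. ring.
    + intros i Hi. rewrite <- Rpower_ratio_mul by auto. ring.
Qed.

Lemma Omega_fdiv n s p q : Gamma n p -> Gamma n q -> Omega n s q p = fdiv n (omega_gen s) p q.
Proof.
  intros [Pp _] [Pq Sq]. unfold Omega, fdiv, omega_gen, power_gen.
  destruct (Req_EM_T s 0); [|destruct (Req_EM_T s 1)].
  - apply sumn_ext. intros i Hi. specialize (Pp i Hi). specialize (Pq i Hi).
    rewrite half_succ_ratio, !ln_div by lra. ring.
  - apply sumn_ext. intros i Hi. specialize (Pq i Hi).
    rewrite half_succ_ratio by assumption. field. lra.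
  - set (c := / (s * (s - 1))).
    rewrite (sumn_ext n (fun i => q i * (c * (Rpower ((p i / q i + 1) / 2) s - 1)))
              (fun i => c * (q i * Rpower ((p i + q i) / (2 * q i)) s) + - c * q i)).
    + rewrite sumn_lin, Sq. ring.
    + intros i Hi. rewrite half_succ_ratio by auto. ring.
Qed.

(* [g_s'' / f_t''] at [x]: the constants of the two-sided bound. *)
Definition omega_phi_ratio (s t x : R) : R :=
  / (4 * Rpower x (t - 2)) * Rpower ((x + 1) / 2) (s - 2).

Lemma omega_phi_ratio_mul s t u :
  omega_phi_ratio s t u * Rpower u (t - 2) = / 4 * Rpower ((u + 1) / 2) (s - 2).
Proof.
  unfold omega_phi_ratio. assert (0 < Rpower u (t - 2)) by apply exp_pos.
  field. lra.
Qed.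

Lemma omega_phi_ratio_exp s t x :
  omega_phi_ratio s t x = / 4 * exp ((s - 2) * ln ((x + 1) / 2) + (2 - t) * ln x).
Proof.
  unfold omega_phi_ratio, Rpower.
  rewrite Rinv_mult, <- exp_Ropp, Rmult_assoc, <- exp_plus. do 2 f_equal. ring.
Qed.

Lemma exp_le_exp a b : a <= b -> exp a <= exp b.
Proof. intros [H| <-]; [left; apply exp_increasing, H|right; reflexivity]. Qed.

Lemma ln_half_succ_le x y : 0 < x -> x <= y -> ln ((x + 1) / 2) <= ln ((y + 1) / 2).
Proof. intros. apply ln_le; lra. Qed.

Lemma ln_div_half_succ_le x y : 0 < x -> x <= y ->
  ln x - ln ((x + 1) / 2) <= ln y - ln ((y + 1) / 2).
Proof.
  intros Hx Hxy. rewrite <- !ln_div by lra. apply ln_le.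
  - apply Rdiv_lt_0_compat; lra.
  - apply Rmult_le_reg_r with ((x + 1) * (y + 1)); [nra|].
    replace (x / ((x + 1) / 2) * ((x + 1) * (y + 1))) with (2 * x * (y + 1)) by (field; lra).
    replace (y / ((y + 1) / 2) * ((x + 1) * (y + 1))) with (2 * y * (x + 1)) by (field; lra).
    nra.
Qed.

(* The exponent of [omega_phi_ratio] is
   [(s - t) ln ((x+1)/2) + (2 - t) (ln x - ln ((x+1)/2))], a combination of two
   nondecreasing functions of [x]. *)
Lemma omega_phi_ratio_le_incr s t x y : s >= t -> t <= 2 -> 0 < x -> x <= y ->
  omega_phi_ratio s t x <= omega_phi_ratio s t y.
Proof.
  intros Hst Ht Hx Hxy. rewrite !omega_phi_ratio_exp.
  apply Rmult_le_compat_l; [lra|]. apply exp_le_exp.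
  pose proof (ln_half_succ_le x y Hx Hxy). pose proof (ln_div_half_succ_le x y Hx Hxy).
  nra.
Qed.

Lemma omega_phi_ratio_le_decr s t x y : s <= t -> t >= 2 -> 0 < x -> x <= y ->
  omega_phi_ratio s t y <= omega_phi_ratio s t x.
Proof.
  intros Hst Ht Hx Hxy. rewrite !omega_phi_ratio_exp.
  apply Rmult_le_compat_l; [lra|]. apply exp_le_exp.
  pose proof (ln_half_succ_le x y Hx Hxy). pose proof (ln_div_half_succ_le x y Hx Hxy).
  nra.
Qed.

Section Bounds.
Variables (n : nat) (p q : nat -> R) (r R0 s t c : R).
Hypotheses (r_pos : 0 < r) (Gp : Gamma n p) (Gq : Gamma n q).
Hypothesis ratio_bounds : forall i, (i < n)%nat -> r <= p i / q i <= R0.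

Lemma Omega_ge_Phi : (forall u, r <= u <= R0 -> c <= omega_phi_ratio s t u) ->
  c * Phi n t p q <= Omega n s q p.
Proof.
  intros H. rewrite Phi_fdiv, Omega_fdiv, <- (Rmult_1_l (fdiv n (omega_gen s) p q)) by assumption.
  apply (fdiv_compare n p q r R0 c 1 _ (power_gen1 t) (fun u => Rpower u (t - 2))
           _ (omega_gen1 s) (fun u => / 4 * Rpower ((u + 1) / 2) (s - 2)));
    auto using is_derive_power_gen, is_derive_power_gen1, is_derive_omega_gen,
      is_derive_omega_gen1, power_gen_1, omega_gen_1.
  intros u Hu. rewrite Rmult_1_l, <- (omega_phi_ratio_mul s t u).
  apply Rmult_le_compat_r; [apply Rlt_le, exp_pos|apply H, Hu].
Qed.

Lemma Omega_le_Phi : (forall u, r <= u <= R0 -> omega_phi_ratio s t u <= c) ->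
  Omega n s q p <= c * Phi n t p q.
Proof.
  intros H. rewrite Phi_fdiv, Omega_fdiv, <- (Rmult_1_l (fdiv n (omega_gen s) p q)) by assumption.
  apply (fdiv_compare n p q r R0 1 c _ (omega_gen1 s) (fun u => / 4 * Rpower ((u + 1) / 2) (s - 2))
           _ (power_gen1 t) (fun u => Rpower u (t - 2)));
    auto using is_derive_power_gen, is_derive_power_gen1, is_derive_omega_gen,
      is_derive_omega_gen1, power_gen_1, omega_gen_1.
  intros u Hu. rewrite Rmult_1_l, <- (omega_phi_ratio_mul s t u).
  apply Rmult_le_compat_r; [apply Rlt_le, exp_pos|apply H, Hu].
Qed.

End Bounds.

Theorem theorem4p1 (n : nat) (p q : nat -> R) (r R0 s t : R) :
  (2 <= n)%nat -> Gamma n p -> Gamma n q ->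
  0 < r -> r <= R0 ->
  (forall i, (i < n)%nat -> r <= p i / q i <= R0) ->
  ((s >= t /\ t <= 2) ->
     / (4 * Rpower r (t - 2)) * Rpower ((r + 1) / 2) (s - 2) * Phi n t p q
       <= Omega n s q p
     /\ Omega n s q p
       <= / (4 * Rpower R0 (t - 2)) * Rpower ((R0 + 1) / 2) (s - 2) * Phi n t p q)
  /\
  ((s <= t /\ t >= 2) ->
     / (4 * Rpower R0 (t - 2)) * Rpower ((R0 + 1) / 2) (s - 2) * Phi n t p q
       <= Omega n s q p
     /\ Omega n s q p
       <= / (4 * Rpower r (t - 2)) * Rpower ((r + 1) / 2) (s - 2) * Phi n t p q).
Proof.
  intros _ Gp Gq r_pos _ B.
  split; intros [Hst Ht]; split.
  - apply (Omega_ge_Phi n p q r R0); auto.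
    intros u Hu. apply (omega_phi_ratio_le_incr s t r u); lra.
  - apply (Omega_le_Phi n p q r R0); auto.
    intros u Hu. apply (omega_phi_ratio_le_incr s t u R0); lra.
  - apply (Omega_ge_Phi n p q r R0); auto.
    intros u Hu. apply (omega_phi_ratio_le_decr s t u R0); lra.
  - apply (Omega_le_Phi n p q r R0); auto.
    intros u Hu. apply (omega_phi_ratio_le_decr s t r u); lra.
Qed.
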